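(* It is not possible in general to construct by origami a right triangle with given hypotenuse and leg. Precisely: $\sqrt{2+\sqrt2}\in\mathbb F_0$ and $1\in\mathbb F_0$, but $\sqrt{(\sqrt{2+\sqrt2})^2-1^2}=\sqrt{1+\sqrt2}\notin\mathbb F_0$. In particular $\mathbb F_0$ is not closed under $(h,a)\mapsto\sqrt{h^2-a^2}$ for $h>a>0$.
   Context: An origami pair is a pair $(\mathcal P,\mathcal L)$ where $\mathcal P\subset\mathbb R^2$ is a set of points and $\mathcal L$ is a collection of lines in $\mathbb R^2$ such that: (i) the intersection point of any two non-parallel lines of $\mathcal L$ lies in $\mathcal P$; (ii) for any two distinct points of $\mathcal P$, the line through them is in $\mathcal L$; (iii) for any two distinct points of $\mathcal P$, the perpendicular bisector of the segment joining them is in $\mathcal L$; (iv) if $L_1,L_2\in\mathcal L$, then every line equidistant from $L_1$ and $L_2$ is in $\mathcal L$ (the midline if they are parallel, the angle bisectors if they intersect); (v) if $L_1,L_2\in\mathcal L$, then the mirror reflection of $L_2$ across $L_1$ is in $\mathcal L$. A set $\mathcal P\subset\mathbb R^2$ is closed under origami constructions if there is a collection of lines $\mathcal L$ with $(\mathcal P,\mathcal L)$ an origami pair. The set of origami constructible points is $\mathcal P_0=\bigcap\{\mathcal P : (0,0),(0,1)\in\mathcal P \text{ and } \mathcal P \text{ is closed under origami constructions}\}$. The set of origami numbers is $\mathbb F_0=\{\alpha\in\mathbb R : \exists v_1,v_2\in\mathcal P_0,\ |\alpha|=\operatorname{dist}(v_1,v_2)\}$. *)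

From Stdlib Require Import Reals.
Open Scope R_scope.

Definition Point : Type := (R * R)%type.

(** A line is given by coefficients (a, b, c) with (a, b) <> (0, 0);
    its points are those p with a * p.x + b * p.y = c.  Collections of lines
    are predicates on coefficient triples; "a line (as a point set) belongs to
    the collection" means some triple in the collection has that point set. *)
Definition Line : Type := (R * R * R)%type.

Definition lA (l : Line) : R := fst (fst l).
Definition lB (l : Line) : R := snd (fst l).
Definition lC (l : Line) : R := snd l.

Definition valid_line (l : Line) : Prop := lA l <> 0 \/ lB l <> 0.

Definition on_line (l : Line) (p : Point) : Prop :=
  lA l * fst p + lB l * snd p = lC l.

Definition has_line (Lc : Line -> Prop) (S : Point -> Prop) : Prop :=
  exists l, Lc l /\ forall p, on_line l p <-> S p.

Definition sqdist (p q : Point) : R :=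
  (fst p - fst q)^2 + (snd p - snd q)^2.

Definition dist (p q : Point) : R := sqrt (sqdist p q).

Definition dist_line (p : Point) (l : Line) : R :=
  Rabs (lA l * fst p + lB l * snd p - lC l) / sqrt (lA l ^ 2 + lB l ^ 2).

Definition reflect (l : Line) (p : Point) : Point :=
  let t := 2 * (lA l * fst p + lB l * snd p - lC l) / (lA l ^ 2 + lB l ^ 2) in
  (fst p - t * lA l, snd p - t * lB l).

Definition parallel (l1 l2 : Line) : Prop := lA l1 * lB l2 - lA l2 * lB l1 = 0.

Definition same_line (l1 l2 : Line) : Prop := forall p, on_line l1 p <-> on_line l2 p.

Definition origami_pair (P : Point -> Prop) (Lc : Line -> Prop) : Prop :=
  (forall l, Lc l -> valid_line l) /\
  (forall l1 l2 p, Lc l1 -> Lc l2 -> ~ parallel l1 l2 ->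
     on_line l1 p -> on_line l2 p -> P p) /\
  (forall p q, P p -> P q -> p <> q ->
     has_line Lc (fun r => (fst r - fst p) * (snd q - snd p)
                           = (snd r - snd p) * (fst q - fst p))) /\
  (forall p q, P p -> P q -> p <> q ->
     has_line Lc (fun r => sqdist r p = sqdist r q)) /\
  (forall l1 l2 l, Lc l1 -> Lc l2 -> ~ same_line l1 l2 -> valid_line l ->
     (forall p, on_line l p -> dist_line p l1 = dist_line p l2) ->
     has_line Lc (on_line l)) /\
  (forall l1 l2, Lc l1 -> Lc l2 ->
     has_line Lc (fun p => on_line l2 (reflect l1 p))).

Definition closed_origami (P : Point -> Prop) : Prop :=
  exists Lc, origami_pair P Lc.

Definition P0 (p : Point) : Prop :=
  forall P : Point -> Prop,
    P (0, 0) -> P (0, 1) -> closed_origami P -> P p.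

Definition F0 (a : R) : Prop :=
  exists v1 v2, P0 v1 /\ P0 v2 /\ Rabs a = dist v1 v2.

(* Folding from (0,0) and (0,1) produces the points (sqrt 2 / 2, sqrt 2 / 2) and (0,-1), at
   distance sqrt (2 + sqrt 2).  Conversely, if K is a subfield of R closed under
   (a, b) |-> sqrt (a^2 + b^2), the points with coordinates in K and the lines with
   coefficients in K form an origami pair: intersections, joins, perpendicular bisectors and
   mirror images are rational in the data, and the angle bisectors of two lines have
   coefficients in K once the equations are normalised by sqrt (a^2 + b^2).  So every origami
   number lies in K.  Take for K the reals with the same rational cut as a totally real
   algebraic number: these are closed under the field operations and under sqrt (a^2 + b^2),
   because every conjugate of such a root squares to a sum of two real squares.  But
   sqrt (1 + sqrt 2) is not totally real: the automorphism of the algebraic numbers sending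
   sqrt 2 to - sqrt 2 sends its square to 1 - sqrt 2 < 0. *)

From Pilot Require Import Defs.
From Stdlib Require Import Reals Lra Psatz.
Open Scope R_scope.

(** * Lines and their equations *)

Definition mkLine (a b c : R) : Line := (a, b, c).

Definition scale_line (k : R) (l : Line) : Line := mkLine (k * lA l) (k * lB l) (k * lC l).

Definition line_sub (l1 l2 : Line) : Line :=
  mkLine (lA l1 - lA l2) (lB l1 - lB l2) (lC l1 - lC l2).

Definition line_value (l : Line) (p : Point) : R := lA l * fst p + lB l * snd p - lC l.

Ltac unfold_lines :=
  unfold line_value, on_line, scale_line, line_sub, mkLine in *; cbn [lA lB lC fst snd] in *.

Lemma on_lineE l p : on_line l p <-> line_value l p = 0.
Proof. unfold on_line, line_value; split; intro; lra. Qed.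

Lemma line_value_scale k l p : line_value (scale_line k l) p = k * line_value l p.
Proof. unfold_lines; ring. Qed.

Lemma line_value_sub l1 l2 p : line_value (line_sub l1 l2) p = line_value l1 p - line_value l2 p.
Proof. unfold_lines; ring. Qed.

Lemma valid_mkLine_l a b c : a <> 0 -> valid_line (mkLine a b c).
Proof. intro H; left; exact H. Qed.

Lemma valid_mkLine_r a b c : b <> 0 -> valid_line (mkLine a b c).
Proof. intro H; right; exact H. Qed.

Lemma line_norm_pos l : valid_line l -> 0 < lA l ^ 2 + lB l ^ 2.
Proof. intros [H|H]; nra. Qed.

Lemma on_line_point l : valid_line l -> exists p, on_line l p.
Proof.
  intros [H|H].
  - exists (lC l / lA l, 0). unfold on_line; simpl. field; auto.
  - exists (0, lC l / lB l). unfold on_line; simpl. field; auto.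
Qed.

Lemma on_line_shift l p t : on_line l p -> on_line l (fst p - t * lB l, snd p + t * lA l).
Proof. unfold on_line; simpl; intros; nra. Qed.

Lemma valid_line_dec l : valid_line l \/ ~ valid_line l.
Proof.
  unfold valid_line. destruct (Req_dec (lA l) 0), (Req_dec (lB l) 0); tauto.
Qed.

Lemma line_value_not_valid l p q : ~ valid_line l -> line_value l p = line_value l q.
Proof.
  intro Hl. unfold valid_line in Hl. unfold line_value.
  destruct (Req_dec (lA l) 0) as [Ha|Ha]; [|tauto].
  destruct (Req_dec (lB l) 0) as [Hb|Hb]; [|tauto].
  rewrite Ha, Hb; ring.
Qed.

Lemma subset_line_parallel l m : valid_line l ->
  (forall p, on_line l p -> on_line m p) -> lA m * lB l = lB m * lA l.
Proof.
  intros Hl Hs. destruct (on_line_point l Hl) as [p0 H0].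
  pose proof (Hs _ H0) as E0. pose proof (Hs _ (on_line_shift l p0 1 H0)) as E1.
  unfold on_line in E0, E1; simpl in E1. lra.
Qed.

Lemma subset_line_proportional l m : valid_line l -> valid_line m ->
  (forall p, on_line l p -> on_line m p) -> exists k, k <> 0 /\ m = scale_line k l.
Proof.
  intros Hl Hm Hs.
  pose proof (line_norm_pos l Hl) as HN.
  pose proof (subset_line_parallel l m Hl Hs) as Hpar.
  destruct (on_line_point l Hl) as [p0 H0].
  pose proof (Hs _ H0) as H0m. unfold on_line in H0, H0m.
  set (k := (lA m * lA l + lB m * lB l) / (lA l ^ 2 + lB l ^ 2)).
  assert (EA : lA m = k * lA l).
  { unfold k. field_simplify_eq; [|lra].
    transitivity (lA m * lA l ^ 2 + lB l * (lA m * lB l)); [ring|]. rewrite Hpar; ring. }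
  assert (EB : lB m = k * lB l).
  { unfold k. field_simplify_eq; [|lra].
    transitivity (lB m * lB l ^ 2 + lA l * (lB m * lA l)); [ring|]. rewrite <- Hpar; ring. }
  exists k. split.
  - intro Hk. rewrite Hk, Rmult_0_l in EA, EB. destruct Hm; contradiction.
  - destruct m as [[a b] c]. unfold scale_line, mkLine, lA, lB, lC in *; simpl in *.
    rewrite <- H0m, <- H0, EA, EB. f_equal. ring.
Qed.

Lemma on_line_scale k l p : k <> 0 -> on_line (scale_line k l) p <-> on_line l p.
Proof.
  intro Hk. rewrite !on_lineE, line_value_scale. split; intro E.
  - destruct (Rmult_integral _ _ E); [contradiction|assumption].
  - rewrite E; ring.
Qed.

Lemma subset_line_eq l m : valid_line l -> valid_line m ->
  (forall p, on_line l p -> on_line m p) -> forall p, on_line m p <-> on_line l p.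
Proof.
  intros Hl Hm Hs p. destruct (subset_line_proportional l m Hl Hm Hs) as [k [Hk ->]].
  apply on_line_scale; exact Hk.
Qed.

Lemma parallel_scale k1 k2 l1 l2 : k1 <> 0 -> k2 <> 0 ->
  parallel (scale_line k1 l1) (scale_line k2 l2) <-> parallel l1 l2.
Proof.
  intros Hk1 Hk2. unfold parallel; unfold_lines.
  replace (k1 * lA l1 * (k2 * lB l2) - k2 * lA l2 * (k1 * lB l1))
    with ((k1 * k2) * (lA l1 * lB l2 - lA l2 * lB l1)) by ring.
  split; intro E.
  - destruct (Rmult_integral _ _ E) as [E'|E']; [|exact E'].
    destruct (Rmult_integral _ _ E'); contradiction.
  - rewrite E; ring.
Qed.

Lemma dist_line_scale k l p : k <> 0 -> valid_line l ->
  dist_line p (scale_line k l) = dist_line p l.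
Proof.
  intros Hk Hv. pose proof (line_norm_pos l Hv) as HN.
  unfold dist_line; unfold_lines.
  replace ((k * lA l) ^ 2 + (k * lB l) ^ 2) with (Rsqr k * (lA l ^ 2 + lB l ^ 2))
    by (unfold Rsqr; ring).
  rewrite sqrt_mult, sqrt_Rsqr_abs by (try apply Rle_0_sqr; lra).
  replace (k * lA l * fst p + k * lB l * snd p - k * lC l)
    with (k * (lA l * fst p + lB l * snd p - lC l)) by ring.
  rewrite Rabs_mult.
  assert (Rabs k <> 0) by (apply Rabs_no_R0; auto).
  assert (sqrt (lA l ^ 2 + lB l ^ 2) <> 0) by (apply Rgt_not_eq, sqrt_lt_R0; lra).
  field. split; auto.
Qed.

Lemma reflect_scale k l p : k <> 0 -> valid_line l -> reflect (scale_line k l) p = reflect l p.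
Proof.
  intros Hk Hv. pose proof (line_norm_pos l Hv) as HN.
  assert (Hk2 : 0 < k * k) by (destruct (Rlt_or_le 0 k); nra).
  unfold reflect; unfold_lines. f_equal; field; split; nra.
Qed.

(* Reflecting [p] across [l1] changes [line_value l2 p] by a multiple of [line_value l1 p],
   which gives the equation of the mirror image of [l2]. *)
Definition reflect_line (l1 l2 : Line) : Line :=
  line_sub l2 (scale_line (2 * (lA l1 * lA l2 + lB l1 * lB l2) / (lA l1 ^ 2 + lB l1 ^ 2)) l1).

Lemma on_line_reflect l1 l2 p : valid_line l1 ->
  on_line l2 (reflect l1 p) <-> on_line (reflect_line l1 l2) p.
Proof.
  intro V. pose proof (line_norm_pos l1 V) as HN.
  rewrite !on_lineE. unfold reflect_line. rewrite line_value_sub, line_value_scale.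
  replace (line_value l2 (reflect l1 p)) with (line_value l2 p -
    2 * (lA l1 * lA l2 + lB l1 * lB l2) / (lA l1 ^ 2 + lB l1 ^ 2) * line_value l1 p).
  - reflexivity.
  - unfold reflect; unfold_lines. field. lra.
Qed.

Lemma valid_reflect_line l1 l2 : valid_line l1 -> valid_line l2 -> valid_line (reflect_line l1 l2).
Proof.
  intros V1 V2. pose proof (line_norm_pos l1 V1) as N1. pose proof (line_norm_pos l2 V2) as N2.
  assert (E : lA (reflect_line l1 l2) ^ 2 + lB (reflect_line l1 l2) ^ 2 = lA l2 ^ 2 + lB l2 ^ 2).
  { unfold reflect_line; unfold_lines. field. lra. }
  destruct (Req_dec (lA (reflect_line l1 l2)) 0) as [Ea|Ea]; [right|left; exact Ea].
  intro Eb. rewrite Ea, Eb in E. lra.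
Qed.

Definition normalize_line (l : Line) : Line := scale_line (/ sqrt (lA l ^ 2 + lB l ^ 2)) l.

Lemma on_line_normalize l p : valid_line l -> on_line (normalize_line l) p <-> on_line l p.
Proof.
  intro V. apply on_line_scale, Rinv_neq_0_compat, Rgt_not_eq, sqrt_lt_R0, line_norm_pos, V.
Qed.

Lemma dist_line_normalize l p : valid_line l ->
  dist_line p l = Rabs (line_value (normalize_line l) p).
Proof.
  intro V. pose proof (sqrt_lt_R0 _ (line_norm_pos l V)) as Hn.
  unfold normalize_line. rewrite line_value_scale, Rabs_mult, Rabs_inv, Rabs_pos_eq by lra.
  unfold dist_line, line_value, Rdiv. ring.
Qed.

Lemma shift_of_on_line l p0 p : valid_line l -> on_line l p0 -> on_line l p ->
  exists t, p = (fst p0 - t * lB l, snd p0 + t * lA l).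
Proof.
  intros V H0 H. pose proof (line_norm_pos l V) as HN. unfold on_line in H0, H.
  exists ((- lB l * (fst p - fst p0) + lA l * (snd p - snd p0)) / (lA l ^ 2 + lB l ^ 2)).
  destruct p as [x y]. simpl in *.
  assert (Hd : lA l * (x - fst p0) + lB l * (y - snd p0) = 0) by lra.
  assert (Ha : lA l * (lA l * (x - fst p0) + lB l * (y - snd p0)) = 0) by (rewrite Hd; ring).
  assert (Hb : lB l * (lA l * (x - fst p0) + lB l * (y - snd p0)) = 0) by (rewrite Hd; ring).
  f_equal; field_simplify_eq; lra.
Qed.

Lemma affine_product_zero a b c d :
  (forall t, (a + b * t) * (c + d * t) = 0) -> (a = 0 /\ b = 0) \/ (c = 0 /\ d = 0).
Proof.
  intro Hz. pose proof (Hz 0) as E0. pose proof (Hz 1) as E1. pose proof (Hz (-1)) as E2.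
  assert (Ebd : b * d = 0) by nra. assert (Ead : a * d + b * c = 0) by nra.
  destruct (Req_dec a 0) as [Ha|Ha].
  - subst a. destruct (Req_dec b 0) as [Hb|Hb]; [left; auto|right].
    split; apply (Rmult_eq_reg_l b); auto; lra.
  - assert (c = 0) by (apply (Rmult_eq_reg_l a); auto; nra). subst c.
    right; split; auto. apply (Rmult_eq_reg_l a); auto; lra.
Qed.

Lemma line_value_product_zero l m1 m2 : valid_line l ->
  (forall p, on_line l p -> line_value m1 p * line_value m2 p = 0) ->
  (forall p, on_line l p -> line_value m1 p = 0) \/ (forall p, on_line l p -> line_value m2 p = 0).
Proof.
  intros Vl Hz. destruct (on_line_point l Vl) as [p0 H0].
  assert (Eshift : forall m t, line_value m (fst p0 - t * lB l, snd p0 + t * lA l)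
     = line_value m p0 + (lB m * lA l - lA m * lB l) * t) by (intros; unfold_lines; ring).
  assert (Hshift : forall m, (forall t, line_value m (fst p0 - t * lB l, snd p0 + t * lA l) = 0) ->
            forall p, on_line l p -> line_value m p = 0).
  { intros m Hm p Hp. destruct (shift_of_on_line l p0 p Vl H0 Hp) as [t ->]. apply Hm. }
  destruct (affine_product_zero (line_value m1 p0) (lB m1 * lA l - lA m1 * lB l)
              (line_value m2 p0) (lB m2 * lA l - lA m2 * lB l)) as [[Ha Hb]|[Hc Hd]].
  - intro t. rewrite <- !Eshift. apply Hz, on_line_shift, H0.
  - left. apply Hshift. intro t. rewrite Eshift, Ha, Hb. ring.
  - right. apply Hshift. intro t. rewrite Eshift, Hc, Hd. ring.
Qed.

(** * Origami constructions *)

Lemma has_line_ext (Lc : Line -> Prop) (S S' : Point -> Prop) :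
  (forall p, S p <-> S' p) -> has_line Lc S -> has_line Lc S'.
Proof.
  intros E [l [Hl He]]. exists l. split; [exact Hl|]. intro p. rewrite He. apply E.
Qed.

Section OrigamiPair.
Variables (P : Point -> Prop) (Lc : Line -> Prop).
Hypothesis HP : origami_pair P Lc.

Lemma has_line_scale l : valid_line l -> has_line Lc (on_line l) ->
  exists k, k <> 0 /\ Lc (scale_line k l).
Proof.
  intros Hv [m [Hm He]].
  assert (Vm : valid_line m) by (destruct HP as [HV _]; auto).
  destruct (subset_line_proportional l m Hv Vm) as [k [Hk Em]].
  - intros p Hp. apply He. exact Hp.
  - exists k. split; [exact Hk|]. rewrite <- Em. exact Hm.
Qed.

Lemma origami_intersection l1 l2 p : valid_line l1 -> valid_line l2 ->
  has_line Lc (on_line l1) -> has_line Lc (on_line l2) ->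
  ~ parallel l1 l2 -> on_line l1 p -> on_line l2 p -> P p.
Proof.
  intros V1 V2 H1 H2 Hnp O1 O2.
  destruct (has_line_scale l1 V1 H1) as [k1 [K1 M1]].
  destruct (has_line_scale l2 V2 H2) as [k2 [K2 M2]].
  destruct HP as [_ [Hi _]]. apply (Hi _ _ p M1 M2).
  - rewrite parallel_scale; assumption.
  - apply on_line_scale; assumption.
  - apply on_line_scale; assumption.
Qed.

Lemma origami_equidistant l1 l2 l q : valid_line l1 -> valid_line l2 -> valid_line l ->
  has_line Lc (on_line l1) -> has_line Lc (on_line l2) ->
  on_line l1 q -> ~ on_line l2 q ->
  (forall p, on_line l p -> dist_line p l1 = dist_line p l2) -> has_line Lc (on_line l).
Proof.
  intros V1 V2 V H1 H2 Q1 Q2 Hd.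
  destruct (has_line_scale l1 V1 H1) as [k1 [K1 M1]].
  destruct (has_line_scale l2 V2 H2) as [k2 [K2 M2]].
  destruct HP as [_ [_ [_ [_ [He _]]]]]. apply (He _ _ l M1 M2); [|exact V|].
  - intro S. apply Q2. rewrite <- (on_line_scale k2) by exact K2.
    apply S. apply on_line_scale; assumption.
  - intros p Hp. rewrite !dist_line_scale by assumption. apply Hd, Hp.
Qed.

Lemma origami_reflection l1 l2 S : valid_line l1 -> valid_line l2 ->
  has_line Lc (on_line l1) -> has_line Lc (on_line l2) ->
  (forall p, on_line l2 (reflect l1 p) <-> S p) -> has_line Lc S.
Proof.
  intros V1 V2 H1 H2 E.
  destruct (has_line_scale l1 V1 H1) as [k1 [K1 M1]].
  destruct (has_line_scale l2 V2 H2) as [k2 [K2 M2]].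
  destruct HP as [_ [_ [_ [_ [_ Hr]]]]].
  refine (has_line_ext _ _ _ _ (Hr _ _ M1 M2)). intro p.
  rewrite reflect_scale, on_line_scale by assumption. apply E.
Qed.

Hypotheses (HO : P (0, 0)) (HI : P (0, 1)).

Lemma origami_y_axis : has_line Lc (on_line (mkLine 1 0 0)).
Proof.
  destruct HP as [_ [_ [Ht _]]].
  refine (has_line_ext _ _ _ _ (Ht _ _ HO HI _)).
  - intro p; unfold_lines; lra.
  - intro E; injection E; lra.
Qed.

Lemma origami_horizontal_bisector a b : P (0, a) -> P (0, b) -> a <> b ->
  has_line Lc (on_line (mkLine 0 1 ((a + b) / 2))).
Proof.
  intros Ha Hb Hab. destruct HP as [_ [_ [_ [Hm _]]]].
  refine (has_line_ext _ _ _ _ (Hm _ _ Ha Hb _)).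
  - intro p; unfold sqdist; unfold_lines. split; intro E.
    + apply (Rmult_eq_reg_l (2 * (b - a))); [nra|lra].
    + nra.
  - intro E; injection E; lra.
Qed.

Lemma origami_horizontal_reflect c d :
  has_line Lc (on_line (mkLine 0 1 c)) -> has_line Lc (on_line (mkLine 0 1 d)) ->
  has_line Lc (on_line (mkLine 0 1 (2 * c - d))).
Proof.
  intros Hc Hd. apply (origami_reflection _ _ _ (valid_mkLine_r 0 1 c R1_neq_R0)
    (valid_mkLine_r 0 1 d R1_neq_R0) Hc Hd).
  intro p; unfold reflect; unfold_lines. split; intro E; field_simplify in E; lra.
Qed.

Lemma origami_on_y_axis c : has_line Lc (on_line (mkLine 0 1 c)) -> P (0, c).
Proof.
  intro Hc. apply (origami_intersection (mkLine 1 0 0) (mkLine 0 1 c)).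
  - apply valid_mkLine_l, R1_neq_R0.
  - apply valid_mkLine_r, R1_neq_R0.
  - exact origami_y_axis.
  - exact Hc.
  - unfold parallel; unfold_lines; lra.
  - unfold_lines; lra.
  - unfold_lines; lra.
Qed.

Lemma origami_horizontals :
  has_line Lc (on_line (mkLine 0 1 0)) /\ has_line Lc (on_line (mkLine 0 1 1)) /\
  has_line Lc (on_line (mkLine 0 1 (-1))).
Proof.
  pose proof (origami_horizontal_bisector 0 1 HO HI ltac:(lra)) as Lhalf.
  pose proof (origami_horizontal_bisector 0 _ HO (origami_on_y_axis _ Lhalf) ltac:(lra))
    as Lquarter.
  pose proof (origami_horizontal_reflect _ _ Lquarter Lhalf) as L0.
  pose proof (origami_horizontal_reflect _ _ Lhalf L0) as L1.
  pose proof (origami_horizontal_reflect _ _ L0 L1) as Lm1.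
  replace (2 * ((0 + (0 + 1) / 2) / 2) - (0 + 1) / 2) with 0 in L0, L1, Lm1 by field.
  replace (2 * ((0 + 1) / 2) - 0) with 1 in L1, Lm1 by field.
  replace (2 * 0 - 1) with (-1) in Lm1 by ring.
  auto.
Qed.

Lemma origami_diagonal : has_line Lc (on_line (mkLine 1 (-1) 0)).
Proof.
  destruct origami_horizontals as [L0 _].
  apply (origami_equidistant (mkLine 1 0 0) (mkLine 0 1 0) _ (0, 1));
    try (apply valid_mkLine_l; lra); try (apply valid_mkLine_r; lra);
    auto using origami_y_axis; try (unfold_lines; lra).
  intros p Hp. unfold dist_line; unfold_lines.
  replace (1 ^ 2 + 0 ^ 2) with (0 ^ 2 + 1 ^ 2) by ring.
  do 2 f_equal. lra.
Qed.

(* The line [(sqrt 2 + 1) x = y] bisects the angle between the [y]-axis and the diagonal. *)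
Lemma origami_diagonal_bisector : has_line Lc (on_line (mkLine (sqrt 2 + 1) (-1) 0)).
Proof.
  pose proof (sqrt_lt_R0 2 ltac:(lra)) as Hs0.
  pose proof (sqrt_sqrt 2 ltac:(lra)) as Hs.
  apply (origami_equidistant (mkLine 1 0 0) (mkLine 1 (-1) 0) _ (0, 1));
    try (apply valid_mkLine_l; lra);
    auto using origami_y_axis, origami_diagonal; try (unfold_lines; lra).
  intros p Hp. unfold dist_line; unfold_lines.
  replace (1 ^ 2 + 0 ^ 2) with 1 by ring. replace (1 ^ 2 + (-1) ^ 2) with 2 by ring.
  rewrite sqrt_1.
  replace (1 * fst p + -1 * snd p - 0) with (sqrt 2 * (- fst p)) by nra.
  rewrite Rabs_mult, (Rabs_pos_eq (sqrt 2)) by lra. rewrite Rabs_Ropp.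
  field_simplify; [f_equal; ring | lra].
Qed.

Lemma origami_tangent : has_line Lc (on_line (mkLine 1 1 (sqrt 2))).
Proof.
  pose proof (sqrt_lt_R0 2 ltac:(lra)) as Hs0.
  pose proof (sqrt_sqrt 2 ltac:(lra)) as Hs.
  destruct origami_horizontals as [_ [L1 _]].
  assert (V : valid_line (mkLine (sqrt 2 + 1) (-1) 0)) by (apply valid_mkLine_l; lra).
  apply (origami_reflection _ _ _ V (valid_mkLine_r 0 1 1 R1_neq_R0)
    origami_diagonal_bisector L1).
  intro p. rewrite on_line_reflect by exact V.
  replace (reflect_line _ _) with (scale_line (/ sqrt 2) (mkLine 1 1 (sqrt 2))).
  - apply on_line_scale. apply Rinv_neq_0_compat; lra.
  - unfold reflect_line; unfold_lines.
    replace ((sqrt 2 + 1) ^ 2 + (-1) ^ 2) with (2 * (sqrt 2 + 1) * sqrt 2) by nra.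
    f_equal; [f_equal|]; field_simplify_eq; try nra; repeat split; lra.
Qed.

Lemma origami_diagonal_point : P (sqrt 2 / 2, sqrt 2 / 2).
Proof.
  apply (origami_intersection (mkLine 1 1 (sqrt 2)) (mkLine 1 (-1) 0));
    try (apply valid_mkLine_l; lra); auto using origami_tangent, origami_diagonal;
    unfold parallel; unfold_lines; lra.
Qed.

Lemma origami_point_0_m1 : P (0, -1).
Proof. destruct origami_horizontals as [_ [_ Lm1]]. exact (origami_on_y_axis _ Lm1). Qed.
End OrigamiPair.

Lemma P0_diagonal_point : P0 (sqrt 2 / 2, sqrt 2 / 2).
Proof. intros P HO HI [Lc HP]. exact (origami_diagonal_point P Lc HP HO HI). Qed.

Lemma P0_0_m1 : P0 (0, -1).
Proof. intros P HO HI [Lc HP]. exact (origami_point_0_m1 P Lc HP HO HI). Qed.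

Lemma F0_dist v1 v2 : P0 v1 -> P0 v2 -> F0 (Defs.dist v1 v2).
Proof.
  intros H1 H2. exists v1, v2. split; [exact H1|split; [exact H2|]].
  apply Rabs_pos_eq, sqrt_pos.
Qed.

Lemma F0_1 : F0 1.
Proof.
  replace 1 with (Defs.dist (0, 0) (0, 1)).
  - apply F0_dist; intros P HO HI _; assumption.
  - unfold Defs.dist, sqdist; cbn [fst snd].
    replace ((0 - 0) ^ 2 + (0 - 1) ^ 2) with 1 by ring. apply sqrt_1.
Qed.

Lemma F0_sqrt_2_add_sqrt2 : F0 (sqrt (2 + sqrt 2)).
Proof.
  pose proof (sqrt_sqrt 2 ltac:(lra)) as Hs.
  replace (sqrt (2 + sqrt 2)) with (Defs.dist (sqrt 2 / 2, sqrt 2 / 2) (0, -1)).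
  - exact (F0_dist _ _ P0_diagonal_point P0_0_m1).
  - unfold Defs.dist, sqdist; cbn [fst snd]. f_equal. nra.
Qed.

Lemma sqrt_2_add_sqrt2_gt1 : 1 < sqrt (2 + sqrt 2).
Proof.
  pose proof (sqrt_pos 2). rewrite <- sqrt_1. apply sqrt_lt_1_alt. lra.
Qed.

Lemma pythagoras_sqrt_2_add_sqrt2 : sqrt (sqrt (2 + sqrt 2) ^ 2 - 1 ^ 2) = sqrt (1 + sqrt 2).
Proof.
  pose proof (sqrt_pos 2). rewrite pow2_sqrt by lra. f_equal. ring.
Qed.

(** * Origami numbers lie in every Pythagorean subfield *)

Record pythagorean_subfield (K : R -> Prop) : Prop := {
  pyth0 : K 0;
  pyth1 : K 1;
  pythD : forall a b, K a -> K b -> K (a + b);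
  pythN : forall a, K a -> K (- a);
  pythM : forall a b, K a -> K b -> K (a * b);
  pythV : forall a, K a -> K (/ a);
  pyth_sqrt : forall a b, K a -> K b -> K (sqrt (a * a + b * b))
}.

Section Pythagorean.
Variable K : R -> Prop.
Hypothesis HK : pythagorean_subfield K.

Let K0 := pyth0 K HK.
Let K1 := pyth1 K HK.
Let KD := pythD K HK.
Let KN := pythN K HK.
Let KM := pythM K HK.
Let KV := pythV K HK.

Lemma pythB a b : K a -> K b -> K (a - b).
Proof. intros; unfold Rminus; auto. Qed.

Lemma pythF a b : K a -> K b -> K (a / b).
Proof. intros; unfold Rdiv; auto. Qed.

Lemma pythX a n : K a -> K (a ^ n).
Proof. intro Ha. induction n as [|n IH]; simpl; auto. Qed.

Lemma pyth2 : K 2.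
Proof. replace 2 with (1 + 1) by ring. auto. Qed.

Lemma pyth_norm a b : K a -> K b -> K (sqrt (a ^ 2 + b ^ 2)).
Proof.
  intros Ha Hb. replace (a ^ 2 + b ^ 2) with (a * a + b * b) by ring. apply pyth_sqrt; auto.
Qed.

Ltac pyth_closure :=
  repeat first [ assumption | apply pyth2 | apply pythX | apply pythB | apply pythF
               | apply KD | apply KN | apply KM | apply KV ].

Definition K_point (p : Point) : Prop := K (fst p) /\ K (snd p).

Definition K_coeffs (l : Line) : Prop := K (lA l) /\ K (lB l) /\ K (lC l).

Definition K_line (l : Line) : Prop := valid_line l /\ K_coeffs l.

Lemma K_coeffs_mkLine a b c : K a -> K b -> K c -> K_coeffs (mkLine a b c).
Proof. unfold K_coeffs; auto. Qed.

Lemma K_coeffs_scale k l : K k -> K_coeffs l -> K_coeffs (scale_line k l).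
Proof. intros Hk [Ha [Hb Hc]]. apply K_coeffs_mkLine; auto. Qed.

Lemma K_coeffs_sub l1 l2 : K_coeffs l1 -> K_coeffs l2 -> K_coeffs (line_sub l1 l2).
Proof.
  intros [Ha1 [Hb1 Hc1]] [Ha2 [Hb2 Hc2]]. apply K_coeffs_mkLine; apply pythB; auto.
Qed.

Lemma K_line_of_subset l m : valid_line l -> K_line m ->
  (forall p, on_line l p -> on_line m p) -> has_line K_line (on_line l).
Proof.
  intros Hl [Hm Km] Hs. exists m. split; [split; assumption|].
  apply subset_line_eq; assumption.
Qed.

Lemma K_intersection l1 l2 p : K_line l1 -> K_line l2 -> ~ parallel l1 l2 ->
  on_line l1 p -> on_line l2 p -> K_point p.
Proof.
  intros [_ [A1 [B1 C1]]] [_ [A2 [B2 C2]]] Hnp O1 O2.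
  unfold parallel in Hnp. unfold on_line in O1, O2.
  assert (Ex : fst p = (lC l1 * lB l2 - lC l2 * lB l1) / (lA l1 * lB l2 - lA l2 * lB l1)).
  { rewrite <- O1, <- O2. field. exact Hnp. }
  assert (Ey : snd p = (lA l1 * lC l2 - lA l2 * lC l1) / (lA l1 * lB l2 - lA l2 * lB l1)).
  { rewrite <- O1, <- O2. field. exact Hnp. }
  split; [rewrite Ex|rewrite Ey]; pyth_closure.
Qed.

Lemma K_line_through p q : K_point p -> K_point q -> p <> q ->
  has_line K_line (fun r => (fst r - fst p) * (snd q - snd p) = (snd r - snd p) * (fst q - fst p)).
Proof.
  destruct p as [px py], q as [qx qy]. intros [Kpx Kpy] [Kqx Kqy] Hpq; simpl in *.
  exists (mkLine (qy - py) (px - qx) ((qy - py) * px + (px - qx) * py)). split.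
  - split; [|apply K_coeffs_mkLine; pyth_closure].
    destruct (Req_dec (qy - py) 0); [apply valid_mkLine_r|apply valid_mkLine_l; auto].
    intro E; apply Hpq; f_equal; lra.
  - intro r; unfold_lines; split; intro; nra.
Qed.

Lemma K_line_bisector p q : K_point p -> K_point q -> p <> q ->
  has_line K_line (fun r => sqdist r p = sqdist r q).
Proof.
  destruct p as [px py], q as [qx qy]. intros [Kpx Kpy] [Kqx Kqy] Hpq; simpl in *.
  exists (mkLine (2 * (qx - px)) (2 * (qy - py)) (qx * qx + qy * qy - px * px - py * py)).
  split.
  - split; [|apply K_coeffs_mkLine; pyth_closure].
    destruct (Req_dec (qy - py) 0); [apply valid_mkLine_l|apply valid_mkLine_r];
      intro E; [apply Hpq; f_equal|]; lra.
  - intro r; unfold sqdist; unfold_lines; split; intro; nra.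
Qed.

Lemma K_line_reflect l1 l2 : K_line l1 -> K_line l2 ->
  has_line K_line (fun p => on_line l2 (reflect l1 p)).
Proof.
  intros [V1 HK1] [V2 HK2].
  exists (reflect_line l1 l2). split.
  - split; [apply valid_reflect_line; assumption|].
    apply K_coeffs_sub; [exact HK2|]. apply K_coeffs_scale; [|exact HK1].
    destruct HK1 as [A1 [B1 _]], HK2 as [A2 [B2 _]]. pyth_closure.
  - intro p. symmetry. apply on_line_reflect, V1.
Qed.

Lemma K_coeffs_normalize l : K_coeffs l -> K_coeffs (normalize_line l).
Proof.
  intros Hl. apply K_coeffs_scale; [|exact Hl].
  destruct Hl as [Ha [Hb _]]. apply KV, pyth_norm; assumption.
Qed.

Lemma K_line_of_vanishing_combination u1 u2 e l : K_coeffs u1 -> K_coeffs u2 -> K e -> e <> 0 ->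
  valid_line l -> ~ same_line u1 u2 ->
  (forall p, on_line l p -> line_value u1 p = e * line_value u2 p) -> has_line K_line (on_line l).
Proof.
  intros Ku1 Ku2 Ke He Vl Hns Hz.
  set (m := line_sub u1 (scale_line e u2)).
  assert (Hm : forall p, on_line l p -> on_line m p).
  { intros p Hp. apply on_lineE. unfold m. rewrite line_value_sub, line_value_scale, Hz by exact Hp.
    ring. }
  destruct (valid_line_dec m) as [Vm|Vm].
  - apply (K_line_of_subset l m Vl); [|exact Hm].
    split; [exact Vm|]. apply K_coeffs_sub; [exact Ku1|]. apply K_coeffs_scale; assumption.
  - (* then [u1 = e * u2] identically, so [u1] and [u2] have the same points *)
    exfalso. apply Hns. intro p.
    destruct (on_line_point l Vl) as [p0 H0].
    assert (Ep : line_value m p = 0).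
    { rewrite (line_value_not_valid m p p0 Vm). apply on_lineE, Hm, H0. }
    unfold m in Ep. rewrite line_value_sub, line_value_scale in Ep.
    rewrite !on_lineE. split; intro E; rewrite E in Ep.
    + apply (Rmult_eq_reg_l e); lra.
    + lra.
Qed.

Lemma K_line_equidistant l1 l2 l : K_line l1 -> K_line l2 -> ~ same_line l1 l2 ->
  valid_line l -> (forall p, on_line l p -> dist_line p l1 = dist_line p l2) ->
  has_line K_line (on_line l).
Proof.
  intros [V1 C1] [V2 C2] Hns Vl Hd.
  set (u1 := normalize_line l1). set (u2 := normalize_line l2).
  assert (Hns' : ~ same_line u1 u2).
  { intro S. apply Hns. intro p. rewrite <- (on_line_normalize l1), <- (on_line_normalize l2)
      by assumption. apply S. }
  (* [|u1| = |u2|] on [l], so one of [u1 - u2] and [u1 + u2] vanishes on all of [l]. *)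
  assert (Hsq : forall p, on_line l p ->
     line_value (line_sub u1 (scale_line 1 u2)) p *
     line_value (line_sub u1 (scale_line (-1) u2)) p = 0).
  { intros p Hp. rewrite !line_value_sub, !line_value_scale.
    pose proof (Hd p Hp) as E. rewrite !dist_line_normalize in E by assumption.
    fold u1 u2 in E. revert E. generalize (line_value u1 p) (line_value u2 p). intros v1 v2 E.
    unfold Rabs in E. destruct (Rcase_abs v1), (Rcase_abs v2); nra. }
  assert (Ku1 : K_coeffs u1) by (apply K_coeffs_normalize, C1).
  assert (Ku2 : K_coeffs u2) by (apply K_coeffs_normalize, C2).
  destruct (line_value_product_zero _ _ _ Vl Hsq) as [Z|Z];
    [ apply (K_line_of_vanishing_combination u1 u2 1)
    | apply (K_line_of_vanishing_combination u1 u2 (-1)) ];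
    try assumption; try pyth_closure; try lra;
    intros p Hp; specialize (Z p Hp); rewrite line_value_sub, line_value_scale in Z; lra.
Qed.

Lemma K_origami_pair : origami_pair K_point K_line.
Proof.
  refine (conj _ (conj _ (conj _ (conj _ (conj _ _))))).
  - intros l [V _]; exact V.
  - exact K_intersection.
  - exact K_line_through.
  - exact K_line_bisector.
  - intros l1 l2 l H1 H2 Hns Vl Hd. exact (K_line_equidistant l1 l2 l H1 H2 Hns Vl Hd).
  - exact K_line_reflect.
Qed.

Lemma F0_pythagorean a : F0 a -> K (Rabs a).
Proof.
  intros [v1 [v2 [P1 [P2 E]]]].
  assert (CL : closed_origami K_point) by (exists K_line; exact K_origami_pair).
  assert (Z : K_point (0, 0)) by (split; assumption).
  assert (O : K_point (0, 1)) by (split; assumption).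
  destruct (P1 _ Z O CL) as [X1 Y1], (P2 _ Z O CL) as [X2 Y2].
  rewrite E. unfold Defs.dist, sqdist. apply pyth_norm; pyth_closure.
Qed.
End Pythagorean.

(** * Totally real algebraic numbers *)

From mathcomp Require Import all_boot all_order all_algebra.
From mathcomp Require Import algC algnum cyclotomic.
From mathcomp Require Import reals Rstruct.
From mathcomp Require Import ring lra.
Import Order.TTheory GRing.Theory Num.Theory.

Section RatCuts.
Variable F : archiRcfType.
Implicit Types x y : F.
Local Open Scope ring_scope.

Lemma ratr_lt_add x y q :
  (ratr q < x + y) <-> exists r, (ratr r < x) && (ratr (q - r) < y).
Proof.
split=> [|[r /andP[a b]]]; last by rewrite rmorphB /= in b; lra.
rewrite -ltrBlDr => /rat_in_itvoo[r]; rewrite in_itv /= => /andP[a b].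
by exists r; rewrite b /= rmorphB /= ltrBlDr addrC -ltrBlDr.
Qed.

Lemma ratr_lt_opp x q : (ratr q < - x) = (x < ratr (- q)).
Proof. by rewrite rmorphN /= ltrNr. Qed.

Lemma ratr_lt_scale x c q : 0 < c -> (ratr q < ratr c * x) = (ratr (q / c) < x).
Proof.
move=> c0; have c0' : 0 < ratr c :> F by rewrite ltr0q.
by rewrite rmorphM /= fmorphV /= (ltr_pdivrMr _ _ c0') mulrC.
Qed.

Lemma ratr_lt_sqr x q : (ratr q < x ^+ 2) <->
  (q < 0) \/ exists r, [&& 0 <= r, q <= r * r & (ratr r < x) || (x < ratr (- r))].
Proof.
split.
  move=> h; case: (ltP q 0) => q0; first by left.
  right; have q0' : 0 <= ratr q :> F by rewrite ler0q.
  have : Num.sqrt (ratr q) < `|x| by rewrite -sqrtr_sqr ltr_sqrt // (le_lt_trans q0').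
  move=> /rat_in_itvoo[r]; rewrite in_itv /= => /andP[a b].
  have r0 : 0 < ratr r :> F by apply: le_lt_trans a; exact: sqrtr_ge0.
  exists r; apply/and3P; split.
  - by rewrite -(ler0q F) ltW.
  - rewrite -(ler_rat F) rmorphM /=.
    have e := sqr_sqrtr q0'; have s0 := sqrtr_ge0 (ratr q : F).
    rewrite -e expr2; nra.
  - rewrite rmorphN /=; case: (lerP 0 x) => x0.
      by rewrite ger0_norm // in b; rewrite b.
    by rewrite ltr0_norm // in b; rewrite ltrNr b orbT.
case=> [q0|[r /and3P[r0 qr h]]].
  by apply: lt_le_trans (sqr_ge0 x); rewrite ltrq0.
have r0' : 0 <= ratr r :> F by rewrite ler0q.
have qr' : ratr q <= ratr r * ratr r :> F by rewrite -rmorphM /= ler_rat.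
rewrite rmorphN /= in h; case/orP: h => h; rewrite expr2; nra.
Qed.

Lemma ratr_lt_sqrt x q : (ratr q < Num.sqrt x) <-> (q < 0) \/ (0 <= q /\ ratr (q * q) < x).
Proof.
split.
  move=> h; case: (ltP q 0) => q0; first by left.
  right; split => //; have q0' : 0 <= ratr q :> F by rewrite ler0q.
  case: (ltP 0 x) => x0; last by move: h; rewrite ler0_sqrtr // ltNge q0'.
  by rewrite -(ltr_sqrt _ x0) rmorphM /= -expr2 sqrtr_sqr ger0_norm.
case=> [q0|[q0 h]].
  by apply: lt_le_trans (sqrtr_ge0 x); rewrite ltrq0.
have q0' : 0 <= ratr q :> F by rewrite ler0q.
have x0 : 0 < x by apply: le_lt_trans h; rewrite ler0q mulr_ge0.
by rewrite -(ltr_sqrt _ x0) rmorphM /= -expr2 sqrtr_sqr ger0_norm in h.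
Qed.

Lemma ratr_lt_inv x q : 0 < x -> (ratr q < x^-1) <-> (q <= 0) \/ (0 < q /\ x < ratr (q^-1)).
Proof.
move=> x0; split.
  move=> h; case: (lerP q 0) => q0; first by left.
  right; split => //; have q0' : 0 < ratr q :> F by rewrite ltr0q.
  by rewrite fmorphV /= -[x]invrK ltf_pV2 // ?posrE ?invr_gt0.
case=> [q0|[q0 h]].
  by apply: le_lt_trans (_ : ratr q <= 0) _; rewrite ?invr_gt0 // lerq0.
have q0' : 0 < ratr q :> F by rewrite ltr0q.
by rewrite -[ratr q]invrK ltf_pV2 // ?posrE ?invr_gt0 // -fmorphV.
Qed.
End RatCuts.

Lemma lt_ratr_cut (F : archiRcfType) (x : F) q :
  (x < ratr q)%R <-> exists r, (r < q)%R /\ ~~ (ratr r < x)%R.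
Proof.
split=> [/rat_in_itvoo[r]|[r [rq]]]; last by rewrite -leNgt => /le_lt_trans; apply; rewrite ltr_rat.
by rewrite in_itv /= => /andP[xr rq]; exists r; rewrite -(ltr_rat F) rq -leNgt ltW.
Qed.

Section SameCut.
Context {F1 F2 : archiRcfType}.
Local Open Scope ring_scope.

(* Compares numbers of two archimedean fields, here [R] and [algR], without any embedding
   between them. *)
Definition same_cut (x : F1) (y : F2) := forall q : rat, (ratr q < x) = (ratr q < y).

Lemma same_cut_ratr c : same_cut (ratr c) (ratr c).
Proof. by move=> q; rewrite !ltr_rat. Qed.

Lemma same_cut_gt {x y} : same_cut x y -> forall q : rat, (x < ratr q) = (y < ratr q).
Proof.
move=> h q; apply/idP/idP => /lt_ratr_cut[r [rq xr]]; apply/lt_ratr_cut; exists r.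
  by rewrite -h.
by rewrite h.
Qed.

Lemma same_cut_uniq {x y y'} : same_cut x y -> same_cut x y' -> y = y'.
Proof.
have lt_cut z z' : same_cut x z -> same_cut x z' -> ~ z < z'.
  move=> h h' /rat_in_itvoo[r]; rewrite in_itv /= => /andP[a b].
  by move: (h r) (h' r); rewrite b [ratr r < z]ltNge (ltW a) => ->.
move=> h h'; case: (ltgtP y y') => // yy'.
  by case: (lt_cut _ _ h h' yy').
by case: (lt_cut _ _ h' h yy').
Qed.

Lemma same_cut_add {x y x' y'} : same_cut x y -> same_cut x' y' -> same_cut (x + x') (y + y').
Proof.
move=> h h' q; apply/idP/idP => /ratr_lt_add[r /andP[a b]]; apply/ratr_lt_add; exists r.
  by rewrite -h -h' a b.
by rewrite h h' a b.
Qed.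

Lemma same_cut_opp {x y} : same_cut x y -> same_cut (- x) (- y).
Proof. by move=> h q; rewrite !ratr_lt_opp (same_cut_gt h). Qed.

Lemma same_cut_scale {x y} c : 0 < c -> same_cut x y -> same_cut (ratr c * x) (ratr c * y).
Proof. by move=> c0 h q; rewrite !ratr_lt_scale // h. Qed.

Lemma same_cut_sqr {x y} : same_cut x y -> same_cut (x ^+ 2) (y ^+ 2).
Proof.
move=> h q; apply/idP/idP => /ratr_lt_sqr [q0|[r /and3P[r0 qr H]]]; apply/ratr_lt_sqr;
  (try by left); right; exists r; apply/and3P; split => //.
  by rewrite -h -(same_cut_gt h).
by rewrite h (same_cut_gt h).
Qed.

Lemma same_cut_mul {x y x' y'} : same_cut x y -> same_cut x' y' -> same_cut (x * x') (y * y').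
Proof.
have polarize (F : archiRcfType) (u v : F) :
    u * v = ratr (4%:R^-1 : rat) * ((u + v) ^+ 2 - (u - v) ^+ 2).
  by rewrite fmorphV /= ratr_nat; field.
move=> h h'; rewrite polarize [y * y']polarize.
apply: same_cut_scale; first by rewrite invr_gt0 ltr0n.
apply: same_cut_add; first exact: same_cut_sqr (same_cut_add h h').
exact: same_cut_opp (same_cut_sqr (same_cut_add h (same_cut_opp h'))).
Qed.

Lemma same_cut_inv {x y} : same_cut x y -> same_cut (x^-1) (y^-1).
Proof.
have inv_pos u v : same_cut u v -> 0 < u -> same_cut u^-1 v^-1.
  move=> h u0; have v0 : 0 < v by move: (h 0); rewrite !rmorph0 u0 => <-.
  move=> q; apply/idP/idP.
    move/(ratr_lt_inv _ _ _ u0) => H; apply/(ratr_lt_inv _ _ _ v0).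
    by case: H => [H|[H1 H2]]; [left|right; split => //; rewrite -(same_cut_gt h)].
  move/(ratr_lt_inv _ _ _ v0) => H; apply/(ratr_lt_inv _ _ _ u0).
  by case: H => [H|[H1 H2]]; [left|right; split => //; rewrite (same_cut_gt h)].
move=> h; case: (ltrgt0P x) => x0.
- exact: inv_pos.
- have := inv_pos _ _ (same_cut_opp h); rewrite oppr_gt0 => /(_ x0).
  by rewrite !invrN => /same_cut_opp; rewrite !opprK.
- have h0 : same_cut (ratr 0) y by rewrite rmorph0 -x0.
  rewrite (same_cut_uniq h0 (same_cut_ratr 0)) x0 rmorph0 !invr0.
  by move=> q; rewrite !ltrq0.
Qed.

Lemma same_cut_sqrt {x y} : same_cut x y -> same_cut (Num.sqrt x) (Num.sqrt y).
Proof.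
move=> h q; apply/idP/idP => /ratr_lt_sqrt [q0|[q0 H]]; apply/ratr_lt_sqrt;
  (try by left); right; split => //.
  by rewrite -h.
by rewrite h.
Qed.
End SameCut.

Section TotallyReal.
Local Open Scope ring_scope.

Definition totally_real (y : algR) :=
  forall u : {rmorphism algC -> algC}, u (algRval y) \is Num.real.

Lemma totally_real_ratr c : totally_real (ratr c).
Proof. by move=> u; rewrite !fmorph_rat realE ler0q lerq0 le_total. Qed.

Lemma totally_realD a b : totally_real a -> totally_real b -> totally_real (a + b).
Proof. by move=> ha hb u; rewrite !rmorphD realD. Qed.

Lemma totally_realN a : totally_real a -> totally_real (- a).
Proof. by move=> ha u; rewrite !rmorphN realN. Qed.

Lemma totally_realM a b : totally_real a -> totally_real b -> totally_real (a * b).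
Proof. by move=> ha hb u; rewrite !rmorphM realM. Qed.

Lemma totally_realV a : totally_real a -> totally_real (a^-1).
Proof. by move=> ha u; rewrite !fmorphV realV. Qed.

Lemma real_of_sqr_ge0 (z w : algC) : z ^+ 2 = w -> 0 <= w -> z \is Num.real.
Proof.
move=> e w0; have : z ^+ 2 == sqrtC w ^+ 2 by rewrite sqrtCK e.
rewrite eqf_sqr => /orP[] /eqP ->; last rewrite realN; apply: ger0_real; by rewrite sqrtC_ge0.
Qed.

Lemma totally_real_sqrt_norm a b :
  totally_real a -> totally_real b -> totally_real (Num.sqrt (a ^+ 2 + b ^+ 2)).
Proof.
move=> ha hb u.
have e : Num.sqrt (a ^+ 2 + b ^+ 2) ^+ 2 = a ^+ 2 + b ^+ 2.
  by rewrite sqr_sqrtr // addr_ge0 ?sqr_ge0.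
apply: (@real_of_sqr_ge0 _ (u (algRval a) ^+ 2 + u (algRval b) ^+ 2)).
  by rewrite -[LHS]rmorphXn -[algRval _ ^+ 2]rmorphXn e !rmorphD !rmorphXn.
by rewrite addr_ge0 // real_exprn_even_ge0.
Qed.

(* With [z] a primitive 8th root of unity, [sqrt 2 = z - z^3] is mapped to its opposite by the
   automorphism extending [z |-> z^3]. *)
Lemma algC_aut_opp_sqrt2 :
  exists u : {rmorphism algC -> algC}, forall w : algC, w ^+ 2 = 2 -> u w = - w.
Proof.
have [z pz] := C_prim_root_exists (n:=8) isT.
have [u hu] := Qn_aut_exists (k:=3) (n:=8) isT.
have e8 : z ^+ 8 = 1 := prim_expr_order pz.
have e4 : z ^+ 4 = -1.
  have : (z ^+ 4) ^+ 2 == 1 by rewrite -exprM e8.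
  rewrite sqrf_eq1 => /orP[|/eqP //].
  by rewrite -(prim_order_dvd pz).
set v := z - z ^+ 3.
have ev : v ^+ 2 = 2.
  have -> : v ^+ 2 = z ^+ 2 - 2 * z ^+ 4 + z ^+ 4 * z ^+ 2 by rewrite /v; ring.
  rewrite e4; ring.
have uv : u v = - v.
  rewrite /v rmorphB rmorphXn /= hu //.
  have -> : z ^+ 3 - (z ^+ 3) ^+ 3 = z ^+ 3 - z ^+ 8 * z by ring.
  rewrite e8; ring.
exists u => w ew.
have : w ^+ 2 == v ^+ 2 by rewrite ew ev.
by rewrite eqf_sqr => /orP[] /eqP ->; last rewrite rmorphN uv opprK.
Qed.

Lemma not_totally_real_sqrt_1_add_sqrt2 : ~ totally_real (Num.sqrt (1 + Num.sqrt 2)).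
Proof.
move=> t; set s2 : algR := Num.sqrt 2.
have s0 : 0 <= s2 by exact: sqrtr_ge0.
have es : s2 ^+ 2 = 2 by rewrite sqr_sqrtr.
have ey : Num.sqrt (1 + s2) ^+ 2 = 1 + s2 by rewrite sqr_sqrtr // addr_ge0.
have [u hu] := algC_aut_opp_sqrt2.
have us : u (algRval s2) = - algRval s2 by apply: hu; rewrite -rmorphXn es rmorph_nat.
have := t u; move/real_exprn_even_ge0 => /(_ 2%N isT).
rewrite -!rmorphXn ey !raddfD /= !rmorph1 us subr_ge0 => s1.
have : s2 <= 1 by exact: s1.
nra.
Qed.
End TotallyReal.

Definition totally_real_cut (x : R) : Prop := exists y : algR, same_cut x y /\ totally_real y.

Lemma pythagorean_totally_real_cut : pythagorean_subfield totally_real_cut.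
Proof.
have ratr_cut c : totally_real_cut (ratr c).
  by exists (ratr c); split; [exact: same_cut_ratr | exact: totally_real_ratr].
split.
- by have := ratr_cut 0%R; rewrite rmorph0.
- by have := ratr_cut 1%R; rewrite rmorph1.
- move=> a b [y [h t]] [y' [h' t']].
  by exists (y + y')%R; split; [exact: same_cut_add | exact: totally_realD].
- move=> a [y [h t]].
  by exists (- y)%R; split; [exact: same_cut_opp | exact: totally_realN].
- move=> a b [y [h t]] [y' [h' t']].
  by exists (y * y')%R; split; [exact: same_cut_mul | exact: totally_realM].
- move=> a [y [h t]].
  by exists (y^-1)%R; split; [exact: same_cut_inv | exact: totally_realV].
- move=> a b [y [h t]] [y' [h' t']]; rewrite RsqrtE.
  suff : totally_real_cut (Num.sqrt (a ^+ 2 + b ^+ 2)) by rewrite !expr2.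
  exists (Num.sqrt (y ^+ 2 + y' ^+ 2))%R; split.
    exact: same_cut_sqrt (same_cut_add (same_cut_sqr h) (same_cut_sqr h')).
  exact: totally_real_sqrt_norm.
Qed.

Lemma not_totally_real_cut_sqrt_1_add_sqrt2 : ~ totally_real_cut (sqrt (1 + sqrt 2)).
Proof.
have -> : 2 = ratr (2%:R)%R by rewrite ratr_nat.
rewrite !RsqrtE => -[y [h t]].
have h1 : same_cut (1%R : R) (1%R : algR).
  by rewrite -(rmorph1 (ratr : rat -> R)) -(rmorph1 (ratr : rat -> algR)); exact: same_cut_ratr.
have h2 := same_cut_sqrt (same_cut_add h1 (same_cut_sqrt (same_cut_ratr 2%:R))).
apply: not_totally_real_sqrt_1_add_sqrt2.
by rewrite -ratr_nat -(same_cut_uniq h h2).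
Qed.

Open Scope R_scope.

Theorem mainTheorem9 :
  F0 (sqrt (2 + sqrt 2)) /\ F0 1 /\
  sqrt ((sqrt (2 + sqrt 2)) ^ 2 - 1 ^ 2) = sqrt (1 + sqrt 2) /\
  ~ F0 (sqrt (1 + sqrt 2)) /\
  ~ (forall h a : R, 0 < a -> a < h -> F0 h -> F0 a -> F0 (sqrt (h ^ 2 - a ^ 2))).
Proof.
have not_F0 : ~ F0 (sqrt (1 + sqrt 2)).
  move=> /(F0_pythagorean _ pythagorean_totally_real_cut).
  by rewrite Rabs_pos_eq; [exact: not_totally_real_cut_sqrt_1_add_sqrt2 | exact: sqrt_pos].
split; first exact: F0_sqrt_2_add_sqrt2.
split; first exact: F0_1.
split; first exact: pythagoras_sqrt_2_add_sqrt2.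
split; first exact: not_F0.
move=> pyth; apply: not_F0; rewrite -pythagoras_sqrt_2_add_sqrt2.
exact: pyth Rlt_0_1 sqrt_2_add_sqrt2_gt1 F0_sqrt_2_add_sqrt2 F0_1.
Qed.
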